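(* Let $g(x) = (x^{17}+1)^6 \in \mathbb{F}_{2}[x] \subseteq \mathbb{F}_{256}[x]$ and let $L = \{\alpha_1,\ldots,\alpha_n\}$ be the set of all elements $\alpha \in \mathbb{F}_{256}$ with $g(\alpha) \neq 0$, listed in some order (so $n = 239$). Then the binary Goppa code $C(L,g)$ is a $[239, 21, 103]$ binary linear code, i.e. it has length $239$, dimension $21$ over $\mathbb{F}_2$, and minimum distance $103$.
   Context: For a subset $L=\{\alpha_1,\ldots,\alpha_n\}$ of $\mathbb{F}_{2^m}$ and a polynomial $g(x)\in\mathbb{F}_{2^m}[x]$ with $g(\alpha_i)\neq 0$ for all $i$, the binary Goppa code is $C(L,g) = \{(c_1,\ldots,c_n)\in\mathbb{F}_2^n : \sum_{i=1}^n \frac{c_i}{x-\alpha_i} \equiv 0 \pmod{g(x)}\}$, where $\frac{1}{x-\alpha_i}$ denotes the inverse of $x-\alpha_i$ modulo $g(x)$. A $[n,k,d]$ binary linear code is a $k$-dimensional subspace of $\mathbb{F}_2^n$ whose minimum nonzero Hamming weight is $d$. Here $\mathbb{F}_{256}=\mathbb{F}_{2^8}$. *)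

From HB Require Import structures.
From mathcomp Require Import all_boot all_order all_algebra.
Set Implicit Arguments. Unset Strict Implicit. Unset Printing Implicit Defensive.
Import GRing.Theory.
Local Open Scope ring_scope.

Definition inv_mod (F : fieldType) (g : {poly F}) (a : F) (h : {poly F}) : Prop :=
  (('X - a%:P) * h) %% g = 1.

(* Membership in the binary Goppa code C(L,g): c in F_2^n with
   sum_i c_i/(x - alpha_i) = 0 mod g, where 1/(x-alpha_i) is (any, hence
   the unique up to mod g) inverse of x - alpha_i modulo g. *)
Definition in_goppa (F : fieldType) (n : nat) (L : 'I_n -> F) (g : {poly F})
  (c : 'rV['F_2]_n) : Prop :=
  forall h : 'I_n -> {poly F}, (forall i, inv_mod g (L i) (h i)) ->
    g %| \sum_(i < n) ((c 0 i : nat)%:R : F) *: h i.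

Definition hweight (n : nat) (c : 'rV['F_2]_n) : nat := #|[set i | c 0 i != 0]|.

Definition is_nkd_code (n k d : nat) (C : 'rV['F_2]_n -> Prop) : Prop :=
  (exists G : 'M['F_2]_(k, n), row_free G /\ forall c, C c <-> (c <= G)%MS) /\
  (exists c, C c /\ c != 0 /\ hweight c = d) /\
  (forall c, C c -> c != 0 -> (d <= hweight c)%N).

From Stdlib Require Import NArith.
From HB Require Import structures.
From mathcomp Require Import all_boot all_order all_algebra all_field ring zify.

(* The inverse of X - a modulo g is -(g - g(a)) / ((X - a) g(a)), so C(L, g) is
   the kernel of the parity-check matrix with columns (L_i^m / g(L_i))_(m < deg g).
   The minimum distance is at least deg g + 1 = 103 by the classical Goppa bound:
   g divides sum_(i in S) prod_(j in S, j != i) (X - L_j) for the support S of a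
   codeword, a nonzero polynomial of degree < |S|.  Everything else is a finite
   computation.  Any field with 256 elements contains a root r of the AES
   polynomial x^8 + x^4 + x^3 + x + 1 (it divides x^256 - x), so it is identified
   with bytes, bit i being the coefficient of r^i.  A certificate (a basis of 21
   codewords in echelon form, a codeword of weight 103, and linear forms showing
   that the non-pivot columns are independent) is then checked by evaluation. *)

Set Implicit Arguments.
Unset Strict Implicit.
Unset Printing Implicit Defensive.

Import GRing.Theory.

Local Open Scope ring_scope.

(** * Goppa codes over an arbitrary field *)

Section HornerQuotient.
Variable R : comNzRingType.

Lemma mul_XsubC_geom n (a : R) :
  ('X - a%:P) * \poly_(k < n) a ^+ (n.-1 - k) = 'X^n - (a ^+ n)%:P.
Proof.
elim: n => [|n IHn]; first by rewrite poly_def big_ord0 mulr0 expr0 subrr.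
have -> : \poly_(k < n.+1) a ^+ (n.+1.-1 - k) = 'X^n + a *: \poly_(k < n) a ^+ (n.-1 - k).
  apply/polyP => k; rewrite coefD coefZ !coef_poly coefXn.
  case: (ltngtP k n) => [ltkn|ltnk|->].
  - by rewrite ltnS ltnW // add0r -exprS; congr (_ ^+ _); lia.
  - by rewrite ltnS leqNgt ltnk mulr0 addr0.
  - by rewrite ltnSn subnn mulr0 addr0.
rewrite mulrDr -scalerAr IHn -!mul_polyC !polyC_exp !exprS; ring.
Qed.

(* [horner_quot p (GRing.exp a)] is the quotient of [p - p.[a]] by ['X - a];
   the powers of [a] are abstracted into [s] to make it linear in [s]. *)
Definition horner_quot (p : {poly R}) (s : nat -> R) : {poly R} :=
  \sum_(j < size p) p`_j *: \poly_(k < j) s (j.-1 - k)%N.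

Lemma horner_quotP p a : ('X - a%:P) * horner_quot p (GRing.exp a) = p - p.[a]%:P.
Proof.
rewrite mulr_sumr.
under eq_bigr => j _ do
  rewrite -scalerAr mul_XsubC_geom scalerBr -[_ *: (_ ^+ _)%:P]mul_polyC -polyCM.
by rewrite sumrB -poly_def coefK -rmorph_sum -horner_coef.
Qed.

Lemma size_horner_quot p s : (size (horner_quot p s) <= (size p).-1)%N.
Proof.
apply: (big_ind (fun q : {poly R} => size q <= (size p).-1)%N) => [|q q' hq hq'|j _].
- by rewrite size_poly0.
- by rewrite (leq_trans (size_polyD _ _)) // geq_max hq hq'.
- apply: leq_trans (size_scale_leq _ _) (leq_trans (size_poly _ _) _).
  by have := ltn_ord j; lia.
Qed.

Lemma horner_quot_sum (I : finType) (p : {poly R}) (c : I -> R) (s : I -> nat -> R) :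
  horner_quot p (fun t => \sum_i c i * s i t) = \sum_i c i *: horner_quot p (s i).
Proof.
rewrite /horner_quot; under [RHS]eq_bigr => i _ do rewrite scaler_sumr.
rewrite [RHS]exchange_big /=; apply: eq_bigr => j _.
under eq_bigr => i _ do rewrite scalerA mulrC -scalerA.
rewrite -scaler_sumr; congr (_ *: _); apply/polyP => k.
rewrite coef_poly coef_sum; case: ltnP => hk.
  by apply: eq_bigr => i _; rewrite coefZ coef_poly hk.
by rewrite big1 // => i _; rewrite coefZ coef_poly ltnNge hk mulr0.
Qed.

End HornerQuotient.

Lemma horner_quot_eq0 (R : idomainType) (p : {poly R}) (s : nat -> R) : p != 0 ->
  horner_quot p s = 0 <-> forall m, (m < (size p).-1)%N -> s m = 0.
Proof.
move=> p_neq0; have d_lt : ((size p).-1 < size p)%N by rewrite ltn_predL size_poly_gt0.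
split=> [hq|hs]; last first.
  apply: big1 => j _; apply/polyP => k; rewrite coef0 coefZ coef_poly.
  case: ltnP => hk; rewrite ?mulr0 // hs ?mulr0 //.
  (* [set] merges the elaborations of [size p] under different ring structures,
     which lia would treat as distinct atoms. *)
  have := ltn_ord j; move: (j : nat) hk => J; set N := size _; lia.
elim/ltn_ind=> m IHm ltmd.
have := congr1 (fun q : {poly R} => q`_((size p).-2 - m)) hq.
rewrite coef0 /horner_quot coef_sum (bigD1 (Ordinal d_lt)) //= big1 ?addr0 => [|i ne_i].
  rewrite coefZ coef_poly ifT; last by move: ltmd; set N := size _; lia.
  have -> : ((size p).-2 - ((size p).-2 - m) = m)%N by move: ltmd; set N := size _; lia.
  by rewrite -lead_coefE => /eqP; rewrite mulf_eq0 lead_coef_eq0 (negbTE p_neq0) => /eqP.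
have ne : (i : nat) != (size p).-1 by [].
rewrite coefZ coef_poly; case: ltnP => lt; rewrite ?mulr0 // IHm ?mulr0 //;
  move: (ltn_ord i) ne ltmd lt; move: (i : nat) => I; set N := size _; lia.
Qed.

Lemma F2_val (x : 'F_2) : (x : nat) = (x != 0).
Proof. by case: x => [[|[|]]]. Qed.

Lemma F2_cases (x : 'F_2) : x = 0 \/ x = 1.
Proof. by case: x => [[|[|//]] ?]; [left | right]; apply: val_inj. Qed.

Section Characteristic2.
Variables (R : nzRingType).
Hypothesis pchar2 : 2 \in [pchar R].

Lemma natr_addb (a b : bool) : (a (+) b : nat)%:R = a%:R + b%:R :> R.
Proof. by case: a; case: b; rewrite /= ?addr0 ?add0r // -mulr2n (pcharf0 pchar2). Qed.

Lemma natr_F2D (x y : 'F_2) : (val (x + y))%:R = (x : nat)%:R + (y : nat)%:R :> R.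
Proof. by rewrite -natrD -[RHS](GRing.natr_mod_pchar pchar2). Qed.

Lemma natr_F2M (x y : 'F_2) : (val (x * y))%:R = (x : nat)%:R * (y : nat)%:R :> R.
Proof. by rewrite -natrM -[RHS](GRing.natr_mod_pchar pchar2). Qed.

End Characteristic2.

Lemma pchar_F2 : 2 \in [pchar 'F_2].
Proof. exact: pchar_Fp. Qed.

Lemma dvdp_sum (R : idomainType) (I : Type) (r : seq I) (P : pred I) (d : {poly R})
    (q : I -> {poly R}) :
  (forall i, P i -> d %| q i) -> d %| \sum_(i <- r | P i) q i.
Proof.
by move=> dq; apply: (big_ind (fun q => d %| q)) => [|p p' ? ?|]; rewrite ?dvdp0 ?dvdp_add.
Qed.

Section GoppaCode.
Variables (F : fieldType) (g : {poly F}).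
Hypothesis g_gt1 : (1 < size g)%N.

Lemma g_neq0 : g != 0.
Proof. by rewrite -size_poly_gt0 ltnW. Qed.

Lemma inv_mod_dvdp a h : inv_mod g a h -> g %| ('X - a%:P) * h - 1.
Proof.
by move=> ha; apply/modp_eq0P; rewrite modpD modpN ha modp_small ?size_poly1 // subrr.
Qed.

Lemma inv_mod_unique a h h' : g.[a] != 0 -> inv_mod g a h -> inv_mod g a h' ->
  g %| h - h'.
Proof.
move=> ga ha ha'; have cop : coprimep g ('X - a%:P) by rewrite coprimep_XsubC.
rewrite -(Gauss_dvdpr _ cop) mulrBr.
have -> : ('X - a%:P) * h - ('X - a%:P) * h' =
          (('X - a%:P) * h - 1) - (('X - a%:P) * h' - 1) by rewrite opprB addrA subrK.
by rewrite dvdp_sub ?inv_mod_dvdp.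
Qed.

Definition goppa_inv (a : F) : {poly F} := - (g.[a])^-1 *: horner_quot g (GRing.exp a).

Lemma goppa_invP a : g.[a] != 0 -> inv_mod g a (goppa_inv a).
Proof.
move=> ga; rewrite /inv_mod; have -> : ('X - a%:P) * goppa_inv a = 1 - (g.[a])^-1 *: g.
  rewrite -scalerAr horner_quotP scalerBr scale_polyC mulNr mulVf // scaleNr.
  by rewrite polyCN opprK addrC.
by rewrite modpD modpN modpZl modpp scaler0 subr0 modp_small ?size_poly1.
Qed.

Lemma dvdp_small (p : {poly F}) : (size p <= (size g).-1)%N -> (g %| p) = (p == 0).
Proof.
move=> szp; apply/idP/eqP => [gp|->]; last exact: dvdp0.
apply/eqP; apply: contraLR gp => p_neq0; apply/negP => /(dvdp_leq p_neq0).
by rewrite leqNgt (leq_ltn_trans szp) // ltn_predL ltnW.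
Qed.

Section Code.
Variables (n : nat) (L : 'I_n -> F).
Hypothesis gL : forall i, g.[L i] != 0.

Definition goppa_syndrome (c : 'rV['F_2]_n) (m : nat) : F :=
  \sum_i ((c 0 i : nat)%:R / g.[L i]) * L i ^+ m.

Lemma in_goppa_goppa_inv (c : 'rV['F_2]_n) :
  in_goppa L g c <-> g %| \sum_i (c 0 i : nat)%:R *: goppa_inv (L i).
Proof.
split=> [gc|gc h hh]; first by apply: (gc (fun i => goppa_inv (L i))) => i; apply: goppa_invP.
have -> : \sum_i ((c 0 i : nat)%:R : F) *: h i = \sum_i (c 0 i : nat)%:R *: goppa_inv (L i)
    + \sum_i (c 0 i : nat)%:R *: (h i - goppa_inv (L i)).
  by rewrite -big_split; apply: eq_bigr => i _ /=; rewrite -scalerDr addrC subrK.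
rewrite dvdp_add //; apply: dvdp_sum => i _.
by rewrite -mul_polyC dvdp_mull // (inv_mod_unique (gL i) (hh i) (goppa_invP (gL i))).
Qed.

Lemma sum_goppa_inv (c : 'rV['F_2]_n) : \sum_i (c 0 i : nat)%:R *: goppa_inv (L i) =
  - horner_quot g (goppa_syndrome c).
Proof.
rewrite /goppa_syndrome horner_quot_sum -sumrN; apply: eq_bigr => i _.
by rewrite /goppa_inv scalerA mulrN scaleNr.
Qed.

Lemma in_goppaP (c : 'rV['F_2]_n) :
  in_goppa L g c <-> forall m, (m < (size g).-1)%N -> goppa_syndrome c m = 0.
Proof.
rewrite in_goppa_goppa_inv sum_goppa_inv dvdpNr dvdp_small ?size_horner_quot //.
by rewrite -(horner_quot_eq0 _ g_neq0); split=> [/eqP|->].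
Qed.

Lemma in_goppa0 : in_goppa L g 0.
Proof. by move=> h _; rewrite big1 ?dvdp0 // => i _; rewrite mxE scale0r. Qed.

Lemma in_goppa_comb : 2 \in [pchar F] -> forall a u v,
  in_goppa L g u -> in_goppa L g v -> in_goppa L g (a *: u + v).
Proof.
move=> pchar2 a u v /in_goppaP gu /in_goppaP gv; apply/in_goppaP => m lt_m.
rewrite /goppa_syndrome; under eq_bigr => i _ do
  rewrite !mxE (natr_F2D pchar2) (natr_F2M pchar2) !mulrDl -![a%:R * _ * _]mulrA.
rewrite big_split /= -mulr_sumr.
by move: (gu m lt_m) (gv m lt_m); rewrite /goppa_syndrome => -> ->; rewrite mulr0 addr0.
Qed.

Hypothesis L_inj : injective L.

Lemma goppa_weight_ge (c : 'rV['F_2]_n) : in_goppa L g c -> c != 0 ->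
  (size g <= hweight c)%N.
Proof.
move=> gc c_neq0; set S := [set i | c 0 i != 0].
pose sigma i := \prod_(j in S :\ i) ('X - (L j)%:P).
pose rho := \sum_(i in S) sigma i.
(* As (X - L i) * goppa_inv (L i) = 1 mod g, multiplying the syndrome polynomial
   of c by prod_(j in S) (X - L j) gives rho mod g, so g divides rho; but rho
   does not vanish at L i0 and has size at most #|S|. *)
have [i0 i0S] : exists i0, i0 \in S.
  case: (set_0Vmem S) => [S0|[i iS]]; last by exists i.
  case/eqP: c_neq0; apply/rowP => i; rewrite mxE.
  by apply/eqP; apply: contraT => ci; have := in_set0 i; rewrite -S0 inE ci.
have rho_root : rho.[L i0] != 0.
  rewrite horner_sum (bigD1 i0) //= big1 ?addr0 => [|i /andP [iS ne_i]].
    rewrite horner_prod; apply/prodf_neq0 => j; rewrite in_setD1 => /andP [ne_j _].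
    by rewrite hornerXsubC subr_eq0 (inj_eq L_inj) eq_sym.
  by rewrite horner_prod (bigD1 i0) /= ?hornerXsubC ?subrr ?mul0r // in_setD1 eq_sym ne_i.
have dvd_rho : g %| rho.
  have wS : \sum_i ((c 0 i : nat)%:R : F) *: goppa_inv (L i) = \sum_(i in S) goppa_inv (L i).
    rewrite [RHS]big_mkcond; apply: eq_bigr => i _; rewrite F2_val inE.
    by case: (c 0 i != 0); rewrite ?scale1r ?scale0r.
  have -> : rho = \prod_(j in S) ('X - (L j)%:P) * \sum_(i in S) goppa_inv (L i)
      - \sum_(i in S) sigma i * (('X - (L i)%:P) * goppa_inv (L i) - 1).
    rewrite /rho mulr_sumr -sumrB; apply: eq_bigr => i iS.
    by rewrite /sigma (big_setD1 i iS) /=; ring.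
  apply: dvdp_sub; first by rewrite dvdp_mull // -wS; apply: gc => i; apply: goppa_invP.
  by apply: dvdp_sum => i _; rewrite dvdp_mull //; apply/inv_mod_dvdp/goppa_invP.
have size_rho : (size rho <= #|S|)%N.
  apply: (big_ind (fun q : {poly F} => size q <= #|S|)%N) => [|p q hp hq|i iS].
  - by rewrite size_poly0.
  - by rewrite (leq_trans (size_polyD _ _)) // geq_max hp hq.
  - by rewrite /sigma -big_enum /= size_prod_XsubC -cardE (cardsD1 i S) iS.
have rho_neq0 : rho != 0 by apply: contraNneq rho_root => ->; rewrite horner0.
exact: leq_trans (dvdp_leq rho_neq0 dvd_rho) size_rho.
Qed.

End Code.
End GoppaCode.

(** * Row spaces with a pivot certificate *)

Section PivotCertificate.
Variables (K : fieldType) (k n : nat) (C : 'rV[K]_n -> Prop).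
Variables (G : 'M[K]_(k, n)) (piv : 'I_k -> 'I_n).
Hypothesis C0 : C 0.
Hypothesis C_comb : forall a u v, C u -> C v -> C (a *: u + v).
Hypothesis C_row : forall j, C (row j G).
Hypothesis G_piv : forall j j', G j (piv j') = (j == j')%:R.
Hypothesis C_piv : forall c, C c -> (forall j, c 0 (piv j) = 0) -> c = 0.

Let pivmx : 'M[K]_(n, k) := \matrix_(i, j) (i == piv j)%:R.

Lemma mulmx_pivmx m (A : 'M_(m, n)) i j : (A *m pivmx) i j = A i (piv j).
Proof.
rewrite mxE (bigD1 (piv j)) //= mxE eqxx mulr1 big1 ?addr0 // => l ne_l.
by rewrite mxE (negbTE ne_l) mulr0.
Qed.

Lemma mulmx_G_pivmx : G *m pivmx = 1%:M.
Proof. by apply/matrixP => j j'; rewrite mulmx_pivmx G_piv !mxE. Qed.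

Lemma row_free_pivots : row_free G.
Proof. by apply/row_freeP; exists pivmx; apply: mulmx_G_pivmx. Qed.

Lemma C_mulmx (D : 'rV_k) : C (D *m G).
Proof.
rewrite mulmx_sum_row; apply: (big_ind C) => // [u v Cu Cv|j _].
  by rewrite -[u]scale1r; apply: C_comb.
by rewrite -[_ *: _]addr0; apply: C_comb.
Qed.

Lemma submx_pivotsP c : C c <-> (c <= G)%MS.
Proof.
split=> [Cc|/submxP [D ->]]; last exact: C_mulmx.
apply/submxP; exists (c *m pivmx); apply/eqP; rewrite -subr_eq0; apply/eqP.
apply: C_piv => [|j]; first by rewrite addrC -scaleN1r; apply: C_comb => //; apply: C_mulmx.
by rewrite -mulmx_pivmx mulmxBl -[_ *m G *m _]mulmxA mulmx_G_pivmx mulmx1 subrr mxE.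
Qed.

End PivotCertificate.

Local Close Scope ring_scope.

(** * GF(256) as bytes *)

(* GF(2^8) = F_2[r] / (r^8 + r^4 + r^3 + r + 1): bit i is the coefficient of r^i. *)
Definition byte := (bool * bool * bool * bool * bool * bool * bool * bool)%type.

Definition bzero : byte := (false, false, false, false, false, false, false, false).
Definition bone : byte := (true, false, false, false, false, false, false, false).
Definition bX : byte := (false, true, false, false, false, false, false, false).

Definition bxor (x y : byte) : byte :=
  let: (a0, a1, a2, a3, a4, a5, a6, a7) := x in
  let: (b0, b1, b2, b3, b4, b5, b6, b7) := y in
  (a0 (+) b0, a1 (+) b1, a2 (+) b2, a3 (+) b3, a4 (+) b4, a5 (+) b5, a6 (+) b6, a7 (+) b7).

Definition band (x y : byte) : byte :=
  let: (a0, a1, a2, a3, a4, a5, a6, a7) := x in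
  let: (b0, b1, b2, b3, b4, b5, b6, b7) := y in
  (a0 && b0, a1 && b1, a2 && b2, a3 && b3, a4 && b4, a5 && b5, a6 && b6, a7 && b7).

Definition bparity (x : byte) : bool :=
  let: (a0, a1, a2, a3, a4, a5, a6, a7) := x in
  a0 (+) (a1 (+) (a2 (+) (a3 (+) (a4 (+) (a5 (+) (a6 (+) a7)))))).

Definition xtime (x : byte) : byte :=
  let: (a0, a1, a2, a3, a4, a5, a6, a7) := x in
  (a7, a0 (+) a7, a1, a2 (+) a7, a3 (+) a7, a4, a5, a6).

Definition gmul (x y : byte) : byte :=
  let: (b0, b1, b2, b3, b4, b5, b6, b7) := y in
  foldr (fun b acc => bxor (xtime acc) (if b then x else bzero)) bzero
    [:: b0; b1; b2; b3; b4; b5; b6; b7].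

Definition gpow (x : byte) (m : nat) : byte := iter m (gmul x) bone.

(* Fermat: x^254 is the inverse of x *)
Definition ginv (x : byte) : byte := gpow x 254.

Definition byte_of_N (v : N) : byte :=
  (N.testbit v 0, N.testbit v 1, N.testbit v 2, N.testbit v 3,
   N.testbit v 4, N.testbit v 5, N.testbit v 6, N.testbit v 7).

Definition all_bytes : seq byte := [seq byte_of_N (N.of_nat i) | i <- iota 0 256].

Lemma mem_all_bytes x : x \in all_bytes.
Proof.
case: x => [[[[[[[a0 a1] a2] a3] a4] a5] a6] a7].
by case: a0; case: a1; case: a2; case: a3; case: a4; case: a5; case: a6; case: a7;
  vm_compute.
Qed.

Lemma uniq_all_bytes : uniq all_bytes.
Proof. by vm_compute. Qed.

Lemma ginvP : all (fun x => (x == bzero) || (gmul x (ginv x) == bone)) all_bytes.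
Proof. by vm_compute. Qed.

Lemma gpow_bX_256 : gpow bX 256 = bX.
Proof. by vm_compute. Qed.

Lemma bxorK x y : bxor (bxor x y) y = x.
Proof.
case: x => [[[[[[[a0 a1] a2] a3] a4] a5] a6] a7].
by case: y => [[[[[[[b0 b1] b2] b3] b4] b5] b6] b7]; rewrite /= !addbK.
Qed.

Lemma bxor0 : left_id bzero bxor.
Proof. by case=> [[[[[[[b0 b1] b2] b3] b4] b5] b6] b7]. Qed.

Lemma band_bxor m u v : band m (bxor u v) = bxor (band m u) (band m v).
Proof.
case: m => [[[[[[[m0 m1] m2] m3] m4] m5] m6] m7].
case: u => [[[[[[[a0 a1] a2] a3] a4] a5] a6] a7].
by case: v => [[[[[[[b0 b1] b2] b3] b4] b5] b6] b7]; rewrite /= !andb_addr.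
Qed.

Lemma band_bzero m : band m bzero = bzero.
Proof. by case: m => [[[[[[[m0 m1] m2] m3] m4] m5] m6] m7]; rewrite /= !andbF. Qed.

Lemma bparity_bxor u v : bparity (bxor u v) = bparity u (+) bparity v.
Proof.
case: u => [[[[[[[a0 a1] a2] a3] a4] a5] a6] a7].
case: v => [[[[[[[b0 b1] b2] b3] b4] b5] b6] b7].
by case: a0; case: a1; case: a2; case: a3; case: a4; case: a5; case: a6; case: a7;
  rewrite /= ?addNb ?addbN ?negbK.
Qed.

(** * The code of (x^17 + 1)^6 and its certificate *)

Definition bytes_of_N (v : N) : seq byte :=
  [seq byte_of_N (N.of_nat i) | i <- iota 0 256 & N.testbit v (N.of_nat i)].

Definition mask_of_N (v : N) : seq byte :=
  [seq byte_of_N (N.shiftr v (N.of_nat (8 * k))) | k <- iota 0 102].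

Definition goppa_eval (b : byte) : byte :=
  bxor (gpow b 102) (bxor (gpow b 68) (bxor (gpow b 34) bone)).

Definition locators : seq byte := [seq b <- all_bytes | goppa_eval b != bzero].

(* The column (b^m / g(b))_(m < 102) of the parity-check matrix of in_goppaP. *)
Definition parity_column (b : byte) : seq byte :=
  traject (gmul b) (ginv (goppa_eval b)) 102.

Definition vxor (u v : seq byte) : seq byte := [seq bxor uv.1 uv.2 | uv <- zip u v].

Definition syndrome (P : pred byte) (cols : seq (byte * seq byte)) : seq byte :=
  foldr (fun bc acc => if P bc.1 then vxor bc.2 acc else acc) (nseq 102 bzero) cols.

Definition locator_columns : seq (byte * seq byte) :=
  [seq (b, parity_column b) | b <- locators].

Definition dotl (m v : seq byte) : bool :=
  foldr addb false [seq bparity (band mv.1 mv.2) | mv <- zip m v].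

(* A set of bytes is encoded by the number whose bit v is set iff
   byte_of_N v belongs to it.  [basis] is a basis of the code in echelon form with
   respect to [pivots], and [min_word] a codeword of weight 103.  For the k-th
   non-pivot locator a, the k-th mask is a linear form on syndromes (the parity of
   the masked bits) taking the value [a == b] on the parity column of every
   non-pivot locator b: the non-pivot columns are linearly independent. *)
Local Open Scope N_scope.

Definition pivots : seq byte := map byte_of_N
  [:: 229; 234; 235; 237; 238; 240; 241; 242; 243; 244; 245;
      246; 247; 248; 249; 250; 251; 252; 253; 254; 255].

Definition basis : seq (seq byte) := map bytes_of_N
  [:: 1216173480401291097145230749988367684695336149311809052240552577996952;
      31884791961910847503969846631393631813967111419528521585307700537791173;
      58764273796733212565056440362752575069708554230843508545927938582619360;
      332050803956625684420308621078883345816277034915222022683608684794052677;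
      455725298494451753715896166489522563216362177346837680854405755630231804;
      1896987059907526181352257682575449001022933098905461054012863423161658372;
      3537317018181735771667851201732982217081227333138186572797274246629572657;
      7178262542717574358894333296047523160639846890165501044391677011935540856;
      14264652931355791313343979062889566635963059497184066729261040512643899917;
      28380420717285700219724080865543073286194182599278759870150311327683334185;
      56653313865898911407297087197046065668886252108427990475009054166213438692;
      113079014305012645230607596689449928962710507373173730441372661565840415800;
      226172237676365894186161779647683729690962851098344616834342817464213221901;
      452330792504093206912355569564004714672406204936686359244303630839977259048;
      904738172346504890770346691394624916077342746956868917608169436367871107660;
      1809271167729510378247738758674104830049668219520307199230255292463261165685;
      3618518389194795063629570737624410827903010275423158904129244973500491258885;
      7237019841758599268431352428165039288823451672733409599817615510523593455761;
      14474123600870805021485512761004751294318405851130925740018290341479359310556;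
      28948038145342966277987661664493278410509740280590863821296084533075714330268;
      57896161052047532971425782790982362723042941576855316180016556495071912534148].

Definition min_word : seq byte := bytes_of_N
  5427800989020257951003798723798599005435942049549689212342227174373012653.

Definition masks : seq (seq byte) := map mask_of_N
  [:: 110024522941585879501529301619431014848855774249741340985280000815675067794742693220710651495297269716788298966529;
      132871145184570461741084401680944985378184047573186325252224526467654434150668396917954990379705203875361340654644;
      131668691374210993902395614646846409448685890928817220289823430927238469966949492893287415635939162660256577684016;
      126858876172808999284014695722921840406939784124489546738497539931694975570839232457878485682188707184600383257344;
      76957043383969498860728857431521630425015160838301098650786559610714883579947137882853396931021868328402069070868;
      2404907619039131133020650201327632330706287088530066536355410094740127585827153575530741868775861149503069812752;
      108822069125067453891013631119563335062563400093385774441890905940986534665510159562061100210983862206126788343040;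
      11423311124292197088283365319327612934536031806884444288663066560943931521102194530474892286363562989028862535936;
      20441714665520653961634695576179365026416673868497656618261670162227172439921079092459108428017071560928515843888;
      63128824653377835076033213477421230498286887753839859393954886067299718042167053003933563876242828871434547232276;
      135877279701579215736333249611306405613637722701906178124858670123581113392422553072528081669167156195253523890992;
      128061329985268424951429562388751159063226751206753812152865007543767301369931131123107415297081988681950523570708;
      147901817722442037446882909413352902579805405259461702481230989308665131327237665126253401103490269911401962124560;
      30662571970354346345853361708607440094981672738336016247082545643241768058059615488195694421199947894763878961696;
      88981581383134633639481625389411994404571174065750546007991749721868512203021635941240781727210646604867498181632;
      110024522928987427494128153816914068493458393032493566396196722959732292120415431911410028562362311553217293793824;
      143693229392833609173467139343005238338170386358461967571574649839026984800522861615310974816212429421180114561284;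
      143693229392833265683180812571302383817536824769253441140906064754398278151431760257018599183340573563945112126724;
      34269933400172203230818923062962321320236019716043942003731617919706492377101532504209988128712184346358673546244;
      3607361416379886023402598781303304419017797983033145627347765627363314666091682311779583191308165061374434152452;
      26453983685260753172572877326307279695770823742996410514282272996762798425491158239454578714131107760487744320016;
      87177900684743511205412703777246058435375464916989246608296914316063917887576852400575128977362372247019653168692;
      55312874918168341124952722927563261339832397094767400854676714407192392808325292254041270990213756420405912000004;
      132269918278760593891728880865702602174889141791817093147463558175112480618078259380767838983413042099809318565668;
      35472387172736035590477930465996471026766689299788437304377738497124519700656518360611451991371033716355954850564;
      95595077304344468895731986620944264247501249850198790716929358310689353286777304918298488183912504564958734194448;
      27055210573432780275470182872720708790159721822480788115092939988976467408375574353170563511261211881718440962592;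
      111828203647676137246501855207864286744187394933745611330148688953463371546154712938887032354566006165316271092480;
      45693244520544610414032111752274609196038174161837560179902852121603239503340290703609201957503374839196018182416;
      103411027010437157796654167749380600163205411675966349013465045740453451610656437147011243271600441682354962939952;
      131668691390308949616507733539736971673932758948501389062478095441231670914196122174301571315841667032245426646576;
      10220857346968770042190140213002247016856837645867928642313085088301251388312142397575324941093932335458644153600;
      102809800112886399020053089576003349335271861846843977739340039033750830440950807278349758928605038157336732796212;
      146098137013691955038937046642970272794076491751826894683293006399110893529075859062745426618000860531160030198308;
      147901817698504529093561474301908095836650526678892505288833212247330490749182097702847119946098573666781802359812;
      55312874930767189837288043721612649029649598464741557688515924269582173416919997520227610174453202062065134379264;
      131668691376870666276298592457076002413937091996364738577800013527187413506988160574560553956566083669322602129428;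
      122049060974627008739115258025425568015191934603849719249899832301678348455682520954787222876233738864427445945120;
      601226927227155182332283535631224277392514980436108334657286016384809102379314659115289602981074545304683462160;
      36073614089744016206901336896339809316807162357802660663987826022138208471654510599680104182515452805113827985460;
      131067464486878967898786792369957914197275701021932976726385451226919398141596149243660999000125062394045814799924;
      5411042133248865303364482297475616513397888185175182510752062242522046767451050116841979207756979110733178629936;
      142490775611031106849676698839531523392257177523570393620979263639366439812562374066662007578377183146733704231216;
      46294471425654223531017912739232339179556615089264522305806807633777429479866209193189268548261474745918558148404;
      1202453824497805643514151347854405829791454014025670147290729820440319147748609285146229348874056791341478420516;
      101607346325764602616842161829778029630646671456718867138220867382843806993160803409887544347535428929358015880964;
      66134959136230629556196547771338200832728758249388558070810313237646612319002982693012734245344644549738900641284;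
      43889563805075351167321472552962078708817997285131992895028010736268556500493520954034889848352393006117311633460;
      62527597749807919071500249296310713874417869015094741731353995796510146989333161870526467267428407547644066085920;
      82969312375853195733117062245955965240637466165442668513637059644654680527572266028825912969410289885793100173584;
      88981581405391779272493820798427968376498670696769699648633126317120145618632604512677495736943942727934964193828;
      1803680721068441963386206636484786572085174997499903961320071514473910979625769557943260825993362548563266522880;
      1202453809099862840048782092564731992038501228152212065327821731956813479549262336958870226848064084452286508032;
      16834353267199031089378593770054576118418952293847835883964403016901729203040315161805231796973387453006882329364;
      137079733501720117529806667832882761911718011077578956378122558710025209291363355472461773793246808899937988391472;
      601226916588764381770765080654292264895820603210314321831924696495328024889707674471924642577953296950825349924;
      117239245752367474518043120708072134081446803004047155587828675974274935059062628215321658990225607416788848593444;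
      22245395345713898250195135111133469660133225213488036241304754819678147949105213608217996870691921969419761000992;
      15631899441441961256673641669404910064445993997607370949788667743878548806549591680921910868369206269642037668144;
      141889548685343883154964099788160605143189142891620183534326716919363231955447554891655067372336364104813266922784;
      66736186036580955594727216133841658803627630578140585656931102470995148405574009730265293224603622657273445031684;
      80564404760173672697898183162970837001822443269239963960350283372872806129161549196922787764625873979633771983140;
      93190169700144377280224785089221724270661326915512144439597346897804068609724875849774674755096624695891668220676;
      104613480819536345373813083686892684125124797762094147364627603818236070823699051007991268007767233334721397294128;
      137680960394650963861912348851931811334541311590249895937555114436568620869383422463782326804413807397399365206800;
      136478506600949525431771492636711823884270701371965120877737849800939118028299581940835574270742192418387476074020;
      87177900684743677428200224183745322038735954921013101762286320806522272742825130173819011454825592338347253471488;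
      4809815231638442407300294616027431024620695540832106894877065099652566393620204914558528765620844749818479540228;
      21042941555372286810734663159388413564679805571278981187985493607548265566561540495523339409824978675418634827024;
      17435580150191425191326734108322480476937818734044761429120304389479852122151689967239041522850862458400475250468;
      45092017622293988461607056442858657468703606116080458642766870010996580253803854833260368399155581585944668329252;
      146699363924401239914874136822547642596847174137041336099960195998302259138918719897741956859027175141093042809856;
      152110406034552219178734756056702133000994187557388957077960586193033759754000493588261342629883635342156130968864;
      10220857335490044154158493517559668776283179358489317655598168217564766960585013036933573038114986138901998835216;
      135276052777012098162978947954903297835289111714219437328860016233981575325343166812701000568550235055198329018916;
      93190169691045020852532308882724506921537259270875557349065896623453467188428605650732570151930672218292401627428;
      66134959154009005094244468301764668685303802680435788058405218828525692555346116499106059782957731163373486115348;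
      113631884359225720182035761029740857743130745800905135463894532196473783127520852290417992558746336540001629153536;
      88380354495102969275780651335608831097930725149651637096037750815461042421408242005258850010109508787351835456260;
      28858891286521735500959396765898844642197761377775489542209384683650089306875235630787460798311556056950895345716;
      76355816468641332153584905877940827327818913015277482863745789461819545187498898266840114049288482354866786276404;
      40282202407733787036307570846031333478985396154133370314679533728994553748888879626987393477107786145899417361444;
      20441714658381469259663559822307512300169504237590876976533065945727141939808081045746407949995518534518183072256;
      30061345081622943370133178679934800077497034157557540028184417684909464555103421398854090253962795491785508184864;
      137680960408229384955680899353570004885176805205379616132756195789386876737425451108763114301634618035511044009236;
      93791396597694801305782393297638357468353350935099963724697301127961787085217848277685523245490713479947825630500;
      76355816452263052963872279090198269143133983786832180185000195900372523639412141203346740689199967486725422768916;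
      115435565046837457935428065914832994162479794488930868953864318816975627913365494046294346585066304038293432898864;
      6012269023799856689161567419763382756924587323245050387145883677133137734791377236404047765421694675234013175316;
      85374219993352089888045988427577492554656146928877900031610317899351760363355927062378627125383268938119847683636;
      144895683221250868715346428968262151869271440594413584022479992607199282497915109366622420955473120161809482853168;
      72147228153730942795805060359920342596455674984536341313356770160587304428084649322948173647046650836795793760528;
      137680960397730615677578707503811058313588974101588193748514437230925089876660129831816326051946820912671927835940;
      140687094905500962875459829825483724268966383454459221906711398222591911076550626738061343538134517442173811885328;
      94392623503784448456621778256731596447165402743053500485791645195485507157760383121086018312746602733355188077572;
      18036807068879326004710546781490280174488480860264689484885225714962507817402087152969829663476698994216859502384;
      95595077317783373309925877164637287336935141514011374642767493706328085971682817442156588925022162102513280850480;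
      65533732233360876569046986144893902483105207339839535724628768111282752408925521531462043089921980743169780243744;
      1803680725548047753370142582533865783373443405123103266219274042397551030089991772380362827622630874755460862240;
      131668691385969420657323818918116504496694802231382568198838734880096369975026155259224180090149267847039071363380;
      69141093655199776002954024518009224417511110501647575915977566772075610964480083432916724320444816977949779099700;
      34871160292683497747030406540061577146820047103769776816446127173200237420829574632797303802640016096602517570304;
      71546001272558939552081906231607091168351521528297006141038100254027627687854161656075667149337320581365423888416;
      91987715915401785775743901694818610488747820626738447193940524515025945396677541259464324790608761040094121483316;
      115435565053696622138046857301728507732255637243465684988405546428750728857664182605802012986944907761306065172480;
      46294471419774963063262775376660434372098516603270691387281145293758533017666245525658643664657606152287899548192;
      42085883091146434653690452783300452014450676226730316318413797984854224881752012671049778146260685240947282003972;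
      12625764932131342152378242072915961928603454668108504693316327112953360195736210020260888992122517484490137878068;
      117239245744248752823103291125331984778294435726290217871574167374971186635386020570145432959245310690350396431632;
      28257664360554302564592733124733339165704913459145163719632196818256165068494687482473302613057396623154699701248;
      30662571992752022615781870198789992268155456066029940840966206487626572924406027642806337485515839349279204396036;
      6012269020300287966226673071035669196510506579385948007970125052652546331866403535951137542475801817267789531940;
      54110421107669140649000245522289566564701807156673684444696496906905014010967779572538743892360825710514253293364;
      20441714650822676021688501927726506400746927204644428694199150703747997101756031705385510606779244613293210258724;
      25251529883300826812758588247497216094312081253408392672534139165892065250274193362692643971890671265253550057776;
      13226991855579156269262958332884996378181734397093966114525028523693996906468949660589128806411611986949594212624;
      62527597747988026722292722092860121281640718454476937777402323973763895994320695892726982666623529276055420602672;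
      37877294791214933596090972076838817249823130644601185968412683857141073307354403464130331017520919152229936136480;
      146098137006692740225723840098625102821392298718856600599550737001054151587920727485772440688146935354819133347636;
      40883429315643476321467599693867967935380165538685292421566985562673724814002684702378519251246300542982116245796;
      59521463219779981239472721644568260628962508843995288502663321157847219149028127631363139468685641485317757196544;
      52306740415297793409732540244325491459395669985377157785909442636151394094224703929346939836286113590527406827008;
      61926370833219314607646213549973589291912388800328722088663313337890001409423666123703336132957341907722125044784;
      149104271509003940274876828164027347887794349257556260560832738139539643470832871716930991859856067260543706080292;
      107619615328986351717996469550651815430182225003484172419993945906459771935242109238734236603256216559310618947072;
      46895698293947796801820241772890566807808393493225851060639754302470966282762468673367599677151349900736119493904;
      12625764942210571023323999454413683483546419535660769937383382999993978771322395708237448149490869722208292468500;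
      73349681966050140634797790749634329490687556178814819526741020544092106799392300472918816853335931635474997190708;
      61325143923490169459015819980153580804032958080080100853339312538058758738734847390531677485670038974825162291732;
      152110406001235665579647642864841972426995540014267456138374233703176336483779934724591054263523082716299277312768;
      59521463219780293271796169594991809017442271373916647924149107027835175959274905907475043852401547357955400423680;
      5411042131568656844367509965952181650655444992407895139817687176519973962964545138861703787796280363990625620256;
      27656437464263690244124533028583898934611007200783310782812157613150120652956723532475010252410629770979533898244;
      147300590825311199722608949308781742889302864320386084428774683656253581319940812827587140344699275725091285325076;
      68539866764508362341298275833031541040695961469595319560896985448826407449769707239155377533477271562904666252564;
      129263783764970935251602099212071093579346808393709713121118277465856796601995030650266041973716329878989387844864;
      25852756772871907336347582467981508240458862454563012061928343150919137640538393730818888945005353647566900846608;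
      3607361413160033346671913565051274918465294735068274116549986820189162238410717997609846971345283268604671187716;
      124453968565249335727540229225119994020766367174386216986192664875581520569434110424843746668191278046408187840548;
      93791396589295800659307760635887651260830070858940879966214124163789776686533740061714451266281577207580322658356;
      106417161545503969920006640326490467148018197731261269133790883773628632548751238096421929643486637106568402344228;
      137079733492901089189596742518074683208347823404156884981041819308034370331583804937572020413801690999569230787872;
      102208573237873177541664763338507648697327089412211742308182960333861536254603455486299719965921161900493777955860;
      45092017618094464140114088066615071389454632159811421927832752138949832651911322671944698846548733068224957712672;
      77558270284039806071645570197924958953105490417305374474574131380836456524457379464437636687628639669879618025488;
      119644153336970434212378922529123617897035830915687794714898561192635875198959047680100289148919960562414066840868;
      149705498410194150113906687937153590811751567653722139486398064964412266405675641360061572188701019948044388179760;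
      70343547463039637127858264331555951199235370987208077523598355243011114376500528838514107258762243255238649943600;
      88380354478864741999876575925226107424290297534840931590058622883818821141791634235755953055714677866751085541428;
      3607361422539235468749978843894576592665070587388714064614794604790777756169700973058867543672805892310955756320;
      3919666540085524974431630770427912164418393588820599683214507012997332042681982888518837452541240608564;
      2404907610219927513133105667371151374765466068740538997336439754714064143971593619536869699276609586872051518468;
      49300605923765416398040473320802228627976017935819055450507636848738493440217569503069978930394906089064677184516;
      30662571964895070871289825622019227766002776741275499311986971624288570772896186041378033206601735785758938277936;
      125055195474698009121820658282818666694981768068673947475113021097671305289264652977193020902983481089457095538980;
      11423311154668600659242089787473283381431984058354469577059382221632712699303737250440438015021796453061402236436;
      84171766185792409987598550153168427035376940251509435181509282364796232882348260310865120065378374268958527210000;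
      7214722840458636528006889984310995543872014045523168163100389552035339913139816594806525971979910207456719565312;
      107619615325487075059510976156136616270495181712575073840926237602262847273369682756088251850299394268932409016848;
      15030672556909510934569284694242511804260738639472611000227556857788540179549892928453671717898653194576876525316;
      3607361423099312016372453239245630523878819779047627809045369434127530253077808955598999460749663165894898086420;
      114834338156706164624284575667480499731771701371267052394950918943570208697015137322672396203117742268851215964432;
      43288336919283807005653167831436795392273853199822049336800856963981831430332893117032992015271320467586995839284;
      139484641077083866332571220747579070101639903935446026078841526996627815883314803070298356835214920305709593099556;
      54711648009419631601617171504206146545673045631163671172753941940880994555104224791768774854927530836689348433440;
      39079748598914668567752725046901791438260588766198171970424174463385286939216184728348371649602247854310646188080;
      33067479588133132735442902291564526494806792960769521657462008920541350616067467933481546259716340117113218327088;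
      3607361417499467002589897879623641282296747685940873804018432384896401286696553601099211054363391011766402396720;
      132871145165252567423696710650145793190882729184114123839495436917686288457028112896759450832668699054399376118324;
      142490775587653800366016185539089716963461716362435819554079450723534575273685541667106636592514377128566080157444;
      48098152128524487988761146383191188391047893033539573973346863985103455055787390936126626477610652956807987327540;
      1803680722188200252801178739122815825969084616027991705159618834352809661587296751569203909523144403501926994432;
      48699379020615981045039535276297962231635696046296455809076115985553088865921550295782604227226961538143127027968;
      132269918288279536048411969840456246197703684611539407808503895706151226378212974498531143660682743460612208901632;
      18638033970489619120137127197150764188841795779603693268343049227682050672485452902014331102115508781987664577572;
      129263783760351805012429771236155379460711317000084283965690474732275012114105583341623462704255127635789236454916;
      88981581383974541267728409481997646954343689124774971299170164859083184040809283041173938107174769612266994770976;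
      37877294806472809446034139784377740394218321660755125537650779198180875700078720977005102907293040643586580713476;
      148503044627691708560364464838771188928294273895054318436174873512023503141646605927380683492345348923942403202564;
      105815934614077398797772360574566703261107294661516144457058655370319149790623890127514105172620258684095346361648;
      129263783777569627739541730386365389205209865185670696247347488703998100011353243225649805444786980907599781108740;
      106417161517227454639623537950020095480078840564163779125674620424628892858362441733907786286586357749290306944512;
      103411027022895471303539258042135261445967019651605457153193910967431828583412324171791998779696966177880832169264;
      94392623492305733425144478457724643844697572822234073814376843413502901061440206849034229513770953439637743495988;
      53509194223137323045784204033988232953652142704378427176420262202068015197768220251639508908796931921442401509136;
      43889563787017552074709632513413661374977624586726693619711270216612453186426433857465480353921414854265833506352;
      140085867980513767269039410611695686664898314013280581033517414932885732605367892210735394587217062175875823711508;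
      82368085495520516750495567725365074805711008303206009566441150805299264783874898478332840948708121739495438687280;
      31865025777914190247578366038208977177686886247887625606852587964017492912719676521594985059092343383382781449472;
      144895683212991839241483871816189969777807161978095639897161259085186532745585104495746854323357496973430394299952;
      17435580163629913255183347861038653252470062150641627910854905751284565981249724121761284573944506104366173619232;
      128662556868540531178401731430147168729045474337537746384511886263521352050882366664126914690825006473248477316628;
      63730051556107473109075197513301246959876152885715198666996591896361460955263131900352261721828334790780174203136;
      91987715914561878115947504400756848884795026533652954290623668472480073401015948252829334048881470578078191366192;
      114233111243477440567963109559306731634621882002434761329035912552696617119622853885047871160264482730136957048064;
      83570539272843679382507216310321442196641649310355579391480584918493896065391441912196090114735348840111209641472;
      39079748590515610717592323291947680191306820771571911602586467287917208268793073906054133381206429318731429373232;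
      46294471422014396593341889723945637226453021026720586945929860312776682209502032942282758572667357751288287130388;
      81766858562134118862881805117772065468654213729630488832730493864994699556751256338158529397978425170414714087732;
      127460103073859137024262810908258421083308899277839989493397975924433383058467645717924023966942905451296548929280;
      65533732249879189525054650916439568733907798117016176125763209486056839190039240329360916255812744837191896273184;
      36674840991214189879179714241208118439807560990815054072434437860696531255023472060227690188502531536189766043392;
      82969312378932744543891871265840195115196471050479255718318734889562182079956272988634709965685365035826047089156;
      34269933387293961214034301629053287578729640696217104980935610800180289164566336240349629274956205531959309276452;
      138282187287581838802803133024786309402756410252283736565239827460911428517126074743214074175466829064879677051924;
      99803665620934683290646233384811126148185501638950095798699426816925556072652187807590572222134486634371405388052;
      58920236330768702265604951201011008762787099015895908692958396760011384869731937417771578645488353652884130356740;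
      16834353259920268892400761484656161131174520547550242544229419799947075074195986473144282237434802065871261085236;
      69141093666118794571387232834739350308163681787027655301223511492890604679140949896838546805838190612828744864800;
      34269933367836035026815770293675018784947407253129588806650879786589136775301554353696383485525083120285050285108;
      134674825881561443580343291301418592612745526114809446284698584943023686876268572127969848337328964309634715416880;
      6012269025199507434997038451308224687749612985042493506268387291691092844044895354470613635044899541814161638656;
      77558270275780658741628085485986226481903122936434622536103409876137423919256295790204426147063797790459183158564;
      15631899452780561551142510091398582095393595028781057990640948155000033143453159279388323095768231819923632293888;
      18638033964190573701533632158607129724226614240520091625659063982323229618544098462059226000265337500373004771604;
      31865025789952735703484817262747284109016542112448575724211835934357685073079160910223160975492040600805010691108;
      140085867990172329515477387028156880689927464760989773024752133553070293680983644281834776966568301178220641691700;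
      61926370844418137980862598811418113886103593066944457502260535520751973098183970161253618332707044373823782169632].

Local Close Scope N_scope.

Definition nonpivots : seq byte := [seq b <- locators | b \notin pivots].

Definition dual_mask (a : byte) : seq byte := nth [::] masks (index a nonpivots).

(* Taking the columns as an argument makes vm_compute evaluate them only once. *)
Definition dual_basis_check (cols : seq (byte * seq byte)) : bool :=
  all (fun am => all (fun bc => dotl am.2 bc.2 == (am.1 == bc.1)) cols) (zip nonpivots masks).

Lemma size_locators : size locators = 239.
Proof. by vm_compute. Qed.

Lemma codewords_syndrome :
  all (fun V => syndrome (mem V) locator_columns == nseq 102 bzero) (min_word :: basis).
Proof. by vm_compute. Qed.

Lemma min_word_weight : count (mem min_word) locators = 103.
Proof. by vm_compute. Qed.

Lemma pivots_basis_check : [&& size pivots == 21, size basis == 21, all (mem locators) pivots &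
  all (fun j => all (fun j' => (nth bzero pivots j' \in nth [::] basis j) == (j == j'))
    (iota 0 21)) (iota 0 21)].
Proof. by vm_compute. Qed.

Lemma size_masks : size masks = size nonpivots.
Proof. by vm_compute. Qed.

Lemma size_mask_entries : all (fun M => size M == 102) masks.
Proof. by vm_compute. Qed.

Lemma dual_basisP : dual_basis_check [seq (b, parity_column b) | b <- nonpivots].
Proof. by vm_compute. Qed.

Lemma uniq_locators : uniq locators.
Proof. exact: filter_uniq uniq_all_bytes. Qed.

Lemma mem_locators b : (b \in locators) = (goppa_eval b != bzero).
Proof. by rewrite mem_filter mem_all_bytes andbT. Qed.

Lemma mem_nonpivots b : (b \in nonpivots) = (b \notin pivots) && (b \in locators).
Proof. exact: mem_filter. Qed.

(* Keeps unification from evaluating the certificate. *)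
Opaque locators nonpivots masks pivots basis min_word.

Lemma pivotsP : [/\ size pivots = 21, size basis = 21, {subset pivots <= locators} &
  forall j j', j < 21 -> j' < 21 -> (nth bzero pivots j' \in nth [::] basis j) = (j == j')].
Proof.
case/and4P: pivots_basis_check => /eqP sz_piv /eqP sz_basis /allP piv_loc /allP piv_basis.
split=> // j j' lt_j lt_j'.
have := piv_basis j; rewrite mem_iota leq0n add0n lt_j => /(_ isT) /allP /(_ j').
by rewrite mem_iota leq0n add0n lt_j' => /(_ isT) /eqP.
Qed.

Lemma codeword_syndrome V : V \in min_word :: basis ->
  syndrome (mem V) locator_columns = nseq 102 bzero.
Proof. by move=> V_cw; apply/eqP/(allP codewords_syndrome). Qed.

Lemma size_dual_mask a : a \in nonpivots -> size (dual_mask a) = 102.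
Proof.
by move=> a_np; apply/eqP/(allP size_mask_entries)/mem_nth; rewrite size_masks index_mem.
Qed.

Lemma dual_maskP a b : a \in nonpivots -> b \in nonpivots ->
  dotl (dual_mask a) (parity_column b) = (a == b).
Proof.
move=> a_np b_np; have k_lt : index a nonpivots < size (zip nonpivots masks).
  by rewrite size_zip size_masks minnn index_mem.
have := mem_nth (bzero, [::]) k_lt; rewrite nth_zip ?size_masks // nth_index // => aM.
have := dual_basisP; rewrite /dual_basis_check => /allP /(_ _ aM) /allP.
by move=> /(_ (b, parity_column b) (map_f _ b_np)) /eqP.
Qed.

Local Open Scope ring_scope.

(** * Transfer to an abstract field with 256 elements *)

Section ByteModel.
Variables (R : comNzRingType) (r : R).
Hypothesis pchar2 : 2 \in [pchar R].
Hypothesis aes_root : r ^+ 8 + r ^+ 4 + r ^+ 3 + r + 1 = 0.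

Definition phi (x : byte) : R :=
  let: (a0, a1, a2, a3, a4, a5, a6, a7) := x in
  a0%:R + a1%:R * r + a2%:R * r ^+ 2 + a3%:R * r ^+ 3 + a4%:R * r ^+ 4
  + a5%:R * r ^+ 5 + a6%:R * r ^+ 6 + a7%:R * r ^+ 7.

Lemma phi0 : phi bzero = 0. Proof. by rewrite /=; ring. Qed.
Lemma phi1 : phi bone = 1. Proof. by rewrite /=; ring. Qed.
Lemma phiX : phi bX = r. Proof. by rewrite /=; ring. Qed.

Lemma phi_xor x y : phi (bxor x y) = phi x + phi y.
Proof.
case: x => [[[[[[[a0 a1] a2] a3] a4] a5] a6] a7].
case: y => [[[[[[[b0 b1] b2] b3] b4] b5] b6] b7].
by rewrite /= !(natr_addb pchar2); ring.
Qed.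

Lemma phi_xtime x : phi (xtime x) = r * phi x.
Proof.
case: x => [[[[[[[a0 a1] a2] a3] a4] a5] a6] a7].
have two : 2%:R = 0 :> R := pcharf0 pchar2.
apply/eqP; rewrite -subr_eq0 /= !(natr_addb pchar2); apply/eqP.
transitivity (2%:R * a7%:R * (1 + r + r ^+ 3 + r ^+ 4)
              - a7%:R * (r ^+ 8 + r ^+ 4 + r ^+ 3 + r + 1)); first by ring.
by rewrite aes_root two; ring.
Qed.

Lemma phi_gmul x y : phi (gmul x y) = phi x * phi y.
Proof.
have phi_step b acc : phi (bxor (xtime acc) (if b then x else bzero)) = r * phi acc + b%:R * phi x.
  by rewrite phi_xor phi_xtime; case: b; rewrite ?phi0 /=; ring.
case: y => [[[[[[[b0 b1] b2] b3] b4] b5] b6] b7].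
by rewrite /gmul !phi_step phi0 /=; ring.
Qed.

Lemma phi_gpow x m : phi (gpow x m) = phi x ^+ m.
Proof. by elim: m => [|m IHm]; rewrite ?phi1 // /gpow iterS phi_gmul IHm exprS. Qed.

End ByteModel.

Lemma size_XnD (R : nzRingType) n (q : {poly R}) : (size q <= n)%N -> size ('X^n + q) = n.+1.
Proof. by move=> szq; rewrite size_polyDl size_polyXn // ltnS. Qed.

Lemma exists_aes_root (F : finFieldType) : #|F| = 256%N ->
  exists r : F, r ^+ 8 + r ^+ 4 + r ^+ 3 + r + 1 = 0.
Proof.
(* The class q of 'X in F[X]/(pp) is a root of pp, so the byte model gives
   q ^+ 256 = q: pp divides 'X^256 - 'X, which splits over F. *)
move=> cardF; pose pp : {poly F} := 'X^8 + ('X^4 + ('X^3 + ('X + 1))).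
have size_pp : size pp = 9%N by rewrite !size_XnD ?size_XaddC.
have pp_monic : pp \is monic.
  by rewrite monicE lead_coefDl ?lead_coefXn // size_polyXn !size_XnD ?size_XaddC.
have mk_pp : mk_monic pp = pp by rewrite /mk_monic size_pp pp_monic.
pose q := in_qpoly pp 'X.
have q_root : q ^+ 8 + q ^+ 4 + q ^+ 3 + q + 1 = 0.
  have -> : q ^+ 8 + q ^+ 4 + q ^+ 3 + q + 1 = in_qpoly pp pp.
    by rewrite !rmorphD !rmorphXn rmorph1 !addrA.
  by apply: val_inj; rewrite /= mk_pp Pdiv.RingMonic.rmodpp.
have q_pchar : 2 \in [pchar {poly %/ pp}].
  by rewrite pchar_qpoly; apply: (card_finPcharP (n := 8)).
have : q ^+ 256 - q = 0 by rewrite -(phiX q) -(phi_gpow q_pchar q_root) gpow_bX_256 subrr.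
rewrite -rmorphXn -rmorphB => /(congr1 val) /= dvd_pp.
have : pp %| \prod_x ('X - x%:P).
  by rewrite -finField_genPoly cardF dvdpE; apply/Pdiv.Ring.rmodp_eq0P; rewrite -mk_pp.
case/dvdp_prod_XsubC => m; case: (mask m _) => [|x s] /=.
  by rewrite big_nil => /eqp_size; rewrite size_pp size_poly1.
rewrite big_cons => pp_eqp; exists x.
have /rootP : root pp x by rewrite root_factor_theorem (eqp_dvdr _ pp_eqp) dvdp_mulIl.
by rewrite /pp !hornerE; apply.
Qed.

Section ByteField.
Variables (F : fieldType) (r : F).
Hypothesis pchar2 : 2 \in [pchar F].
Hypothesis aes_root : r ^+ 8 + r ^+ 4 + r ^+ 3 + r + 1 = 0.
Local Notation phi := (phi r).

Lemma phi_mul_ginv x : x != bzero -> phi x * phi (ginv x) = 1.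
Proof.
move=> x_neq0; rewrite -phi_gmul //.
by have /allP/(_ x (mem_all_bytes x)) := ginvP; rewrite (negbTE x_neq0) => /eqP ->; apply: phi1.
Qed.

Lemma phi_eq0 x : (phi x == 0) = (x == bzero).
Proof.
apply/eqP/eqP => [phix0|->]; last exact: phi0.
apply/eqP; apply: contraT => /phi_mul_ginv; rewrite phix0 mul0r => /eqP.
by rewrite eq_sym oner_eq0.
Qed.

Lemma phi_ginv x : phi (ginv x) = (phi x)^-1.
Proof.
have [->|x_neq0] := eqVneq x bzero.
  have -> : ginv bzero = bzero by vm_compute.
  by rewrite (phi0 r) invr0.
have phix_neq0 : phi x != 0 by rewrite phi_eq0.
by apply: (mulfI phix_neq0); rewrite phi_mul_ginv // mulfV.
Qed.

Lemma phi_inj : injective phi.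
Proof.
move=> x y phi_xy; rewrite -(bxorK x y).
suff /eqP -> : bxor x y == bzero by rewrite bxor0.
by rewrite -phi_eq0 phi_xor // phi_xy addrr_pchar2.
Qed.

End ByteField.

Lemma dotl_sum (m v : seq byte) k : size m = k -> size v = k ->
  (dotl m v)%:R = \sum_(j < k) (bparity (band (nth bzero m j) (nth bzero v j)))%:R :> 'F_2.
Proof.
move=> <-; elim: m v => [|x m IHm] [|y v] //= sz_v; first by rewrite big_ord0.
by rewrite big_ord_recl -IHm; [rewrite (natr_addb pchar_F2) | case: sz_v].
Qed.

Lemma nth_vxor u v j : size u = size v ->
  nth bzero (vxor u v) j = bxor (nth bzero u j) (nth bzero v j).
Proof.
move=> sz_uv; have [lt_j|le_j] := ltnP j (size u).
  by rewrite (nth_map (bzero, bzero)) ?size_zip ?sz_uv ?minnn -?sz_uv // nth_zip.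
by rewrite !nth_default ?size_map ?size_zip ?sz_uv ?minnn -?sz_uv.
Qed.

Section Goppa256.
Variables (F : fieldType) (r : F).
Hypothesis pchar2 : 2 \in [pchar F].
Hypothesis aes_root : r ^+ 8 + r ^+ 4 + r ^+ 3 + r + 1 = 0.
Variable psi : F -> byte.
Hypotheses (phiK : cancel (phi r) psi) (psiK : cancel psi (phi r)).
Variables (n : nat) (L : 'I_n -> F).
Hypothesis L_inj : injective L.
Hypothesis L_im : forall a, (exists i, L i = a) <-> (('X^17 + 1) ^+ 6 : {poly F}).[a] != 0.

Local Notation g := (('X^17 + 1) ^+ 6 : {poly F}).
Local Notation phi := (phi r).

Lemma goppa_polyE : g = 'X^102 + ('X^68 + ('X^34 + 1)).
Proof.
have pc : 2 \in [pchar {poly F}] by rewrite pchar_poly.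
have sq (p : {poly F}) : (p + 1) ^+ 2 = p ^+ 2 + 1.
  by rewrite sqrrD mulr1 (mulrn_pchar pc) addr0 expr1n.
by rewrite (exprM _ 2 3) sq -exprM exprS sq -exprM; ring.
Qed.

Lemma size_goppa_poly : size g = 103%N.
Proof. by rewrite goppa_polyE !size_XnD ?size_poly1. Qed.

Lemma phi_goppa_eval b : phi (goppa_eval b) = g.[phi b].
Proof. by rewrite goppa_polyE /goppa_eval !phi_xor // !phi_gpow // phi1 !hornerE. Qed.

Lemma phi_parity_column b m : (m < 102)%N ->
  phi (nth bzero (parity_column b) m) = phi b ^+ m / g.[phi b].
Proof.
move=> lt_m; rewrite (set_nth_default (ginv (goppa_eval b))) ?size_traject // nth_traject //.
rewrite -(phi_goppa_eval b) -(phi_ginv pchar2 aes_root).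
elim: m lt_m => [|m IHm] lt_m; first by rewrite mul1r.
by rewrite iterS phi_gmul // IHm ?(ltnW lt_m) // exprS mulrA.
Qed.

Lemma size_parity_column b : size (parity_column b) = 102%N.
Proof. exact: size_traject. Qed.

Lemma phi_syndrome P m : (m < 102)%N ->
  phi (nth bzero (syndrome P locator_columns) m) =
  \sum_(b <- locators | P b) phi (nth bzero (parity_column b) m).
Proof.
move=> lt_m; rewrite /syndrome /locator_columns; set z := nseq _ _.
elim: locators => [|b s IHs] /=; first by rewrite big_nil /z nth_nseq lt_m phi0.
rewrite big_cons; case: (P b) => //.
rewrite nth_vxor ?phi_xor ?IHs // size_parity_column.
elim: s {IHs} => [|b' s IHs] /=; first by rewrite /z.
by case: (P b') => //; rewrite size_map size_zip size_parity_column IHs minnn.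
Qed.

Definition loc (i : 'I_n) : byte := psi (L i).

Lemma phi_loc i : phi (loc i) = L i.
Proof. exact: psiK. Qed.

Lemma goppa_poly_L_neq0 i : g.[L i] != 0.
Proof. by apply/L_im; exists i. Qed.

Lemma loc_locators i : loc i \in locators.
Proof.
by rewrite mem_locators -(phi_eq0 pchar2 aes_root) phi_goppa_eval phi_loc goppa_poly_L_neq0.
Qed.

Lemma locators_loc b : b \in locators -> exists i, loc i = b.
Proof.
rewrite mem_locators -(phi_eq0 pchar2 aes_root) phi_goppa_eval => /L_im [i Li].
by exists i; rewrite /loc Li phiK.
Qed.

Lemma loc_inj : injective loc.
Proof. by move=> i j eq_ij; apply: L_inj; rewrite -!phi_loc eq_ij. Qed.

Lemma big_loc (R : Type) (idx : R) (op : Monoid.com_law idx) (Y : byte -> R) :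
  \big[op/idx]_i Y (loc i) = \big[op/idx]_(b <- locators) Y b.
Proof.
have perm_loc : perm_eq [seq loc i | i <- index_enum 'I_n] locators.
  apply: uniq_perm; [by rewrite (map_inj_uniq loc_inj) index_enum_uniq | exact: uniq_locators |].
  move=> b; apply/mapP/idP => [[i _ ->]|/locators_loc [i <-]]; first exact: loc_locators.
  by exists i; rewrite ?mem_index_enum.
by rewrite -(perm_big _ perm_loc) big_map.
Qed.

Lemma n_eq239 : n = 239%N.
Proof.
have := big_loc addn (fun _ => 1%N); rewrite sum1_card card_ord sum1_size => ->.
exact: size_locators.
Qed.

Lemma size_goppa_poly_gt1 : (1 < size g)%N.
Proof. by rewrite size_goppa_poly. Qed.

Definition word_of (P : pred byte) : 'rV['F_2]_n := \row_i (P (loc i))%:R.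

Lemma goppa_syndrome_word_of P m : (m < 102)%N ->
  goppa_syndrome g L (word_of P) m = phi (nth bzero (syndrome P locator_columns) m).
Proof.
move=> lt_m; rewrite phi_syndrome // big_mkcond -big_loc; apply: eq_bigr => i _.
rewrite mxE phi_parity_column // phi_loc mulrAC -mulrA.
by case: (P (loc i)); rewrite /= ?mul1r ?mul0r.
Qed.

Lemma in_goppa_word_of P : syndrome P locator_columns = nseq 102 bzero ->
  in_goppa L g (word_of P).
Proof.
move=> syn0; apply/(in_goppaP size_goppa_poly_gt1 goppa_poly_L_neq0) => m.
by rewrite size_goppa_poly => lt_m; rewrite goppa_syndrome_word_of // syn0 nth_nseq lt_m phi0.
Qed.

Lemma hweight_word_of P : hweight (word_of P) = count P locators.
Proof.
rewrite /hweight -sum1_card -sum1_count big_mkcond (big_mkcond P) -big_loc /=.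
by apply: eq_bigr => i _; rewrite inE mxE; case: (P (loc i)).
Qed.

Lemma psiD x y : psi (x + y) = bxor (psi x) (psi y).
Proof. by apply: (can_inj phiK); rewrite phi_xor // !psiK. Qed.

Lemma psi0 : psi 0 = bzero.
Proof. by rewrite -(phi0 r) phiK. Qed.

Definition masked_parity (m : byte) (x : F) : 'F_2 := (bparity (band m (psi x)))%:R.

Lemma masked_parity0 m : masked_parity m 0 = 0.
Proof. by rewrite /masked_parity psi0 band_bzero. Qed.

Lemma masked_parity_sum m (e : 'I_n -> 'F_2) (y : 'I_n -> F) :
  masked_parity m (\sum_i (e i : nat)%:R * y i) = \sum_i e i * masked_parity m (y i).
Proof.
have masked_parityD : {morph masked_parity m : x x' / x + x'}.
  by move=> x x'; rewrite /masked_parity psiD band_bxor bparity_bxor (natr_addb pchar_F2).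
rewrite (big_morph (masked_parity m) masked_parityD (masked_parity0 m)); apply: eq_bigr => i _.
by case: (F2_cases (e i)) => ->; rewrite ?mul0r ?masked_parity0 // !mul1r.
Qed.

Lemma in_goppa_pivots e : in_goppa L g e -> (forall i, loc i \in pivots -> e 0 i = 0) ->
  e = 0.
Proof.
(* The dual mask of a non-pivot locator loc i0, applied to the syndrome
   equations of e, isolates e 0 i0. *)
move=> /(in_goppaP size_goppa_poly_gt1 goppa_poly_L_neq0) e_code e_piv.
apply/rowP => i0; rewrite mxE; have [/e_piv //|np0] := boolP (loc i0 \in pivots).
have np_loc i : loc i \notin pivots -> loc i \in nonpivots.
  by move=> np; rewrite mem_nonpivots np loc_locators.
set M := dual_mask (loc i0).
have e_dot : \sum_i e 0 i * (dotl M (parity_column (loc i)))%:R = 0.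
  under eq_bigr => i _ do
    rewrite (dotl_sum (size_dual_mask (np_loc _ np0)) (size_parity_column _)) mulr_sumr.
  rewrite exchange_big big1 // => k _.
  have col_k i : L i ^+ k / g.[L i] = phi (nth bzero (parity_column (loc i)) k).
    by rewrite phi_parity_column // phi_loc.
  rewrite -[RHS](masked_parity0 (nth bzero M k)) -[in RHS](e_code k) ?size_goppa_poly //.
  rewrite /goppa_syndrome; under [in RHS]eq_bigr => i _ do rewrite mulrAC -mulrA col_k.
  by rewrite masked_parity_sum; apply: eq_bigr => i _; rewrite /masked_parity phiK.
rewrite -[RHS]e_dot (bigD1 i0) //= dual_maskP ?np_loc // eqxx mulr1 big1 ?addr0 // => i ne_i.
have [/e_piv -> |np] := boolP (loc i \in pivots); first by rewrite mul0r.
by rewrite dual_maskP ?np_loc // (inj_eq loc_inj) eq_sym (negbTE ne_i) mulr0.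
Qed.

Lemma hweight0 : hweight (0 : 'rV['F_2]_n) = 0%N.
Proof.
rewrite /hweight (_ : [set i | _] = set0) ?cards0 //.
by apply/setP => i; rewrite !inE mxE eqxx.
Qed.

Lemma goppa256_generator :
  exists G : 'M['F_2]_(21, n), row_free G /\ forall c, in_goppa L g c <-> (c <= G)%MS.
Proof.
have [sz_piv sz_basis piv_loc piv_basis] := pivotsP.
have /fin_all_exists [piv pivE] : forall j : 'I_21, exists i, loc i = nth bzero pivots j.
  by move=> j; apply/locators_loc/piv_loc/mem_nth; rewrite sz_piv.
pose G : 'M['F_2]_(21, n) := \matrix_(j, i) (loc i \in nth [::] basis j)%:R.
have G_piv j j' : G j (piv j') = (j == j')%:R by rewrite mxE pivE piv_basis.
have C_comb := in_goppa_comb size_goppa_poly_gt1 goppa_poly_L_neq0 pchar2.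
have C_row j : in_goppa L g (row j G).
  have -> : row j G = word_of (mem (nth [::] basis j)) by apply/rowP => i; rewrite !mxE.
  by apply/in_goppa_word_of/codeword_syndrome; rewrite inE mem_nth ?orbT ?sz_basis.
have C_piv c : in_goppa L g c -> (forall j, c 0 (piv j) = 0) -> c = 0.
  move=> gc c_piv; apply: in_goppa_pivots => // i /(nthP bzero) [j lt_j pivj].
  rewrite -(c_piv (Ordinal (lt_j : j < 21)%N)); congr (c 0 _).
  by apply: loc_inj; rewrite pivE.
exists G; split; first exact: row_free_pivots G_piv.
exact: submx_pivotsP (@in_goppa0 _ g _ L) C_comb C_row G_piv C_piv.
Qed.

Lemma goppa256_min_word : exists c, [/\ in_goppa L g c, c != 0 & hweight c = 103%N].
Proof.
have weight : hweight (word_of (mem min_word)) = 103%N.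
  by rewrite hweight_word_of min_word_weight.
exists (word_of (mem min_word)); split=> //.
  by apply/in_goppa_word_of/codeword_syndrome; rewrite mem_head.
by apply: contra_eq_neq weight => ->; rewrite hweight0.
Qed.

Lemma goppa256_code : n = 239%N /\ is_nkd_code 21 103 (fun c => in_goppa L g c).
Proof.
split; first exact: n_eq239.
split; first exact: goppa256_generator.
split; first by have [c [gc c_neq0 wc]] := goppa256_min_word; exists c.
move=> c gc c_neq0; rewrite -size_goppa_poly.
exact: (goppa_weight_ge size_goppa_poly_gt1 goppa_poly_L_neq0 L_inj) gc c_neq0.
Qed.

End Goppa256.

Lemma card_byte : #|{: byte}| = 256%N.
Proof. by rewrite !card_prod card_bool. Qed.

Unset Implicit Arguments.

Theorem mainTheorem1 (F : finFieldType) (hF : #|F| = 256%N)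
  (n : nat) (L : 'I_n -> F) (hLinj : injective L)
  (hLim : forall a : F, (exists i, L i = a) <-> (('X^17 + 1) ^+ 6 : {poly F}).[a] != 0) :
  n = 239%N /\ @is_nkd_code n 21%N 103%N (fun c => in_goppa L (('X^17 + 1) ^+ 6) c) .
Proof.
have pchar2 : 2 \in [pchar F] by apply: (card_finPcharP (n := 8)).
have [r aes_root] := exists_aes_root hF.
have [psi phiK psiK] : bijective (phi r).
  by apply: inj_card_bij (phi_inj pchar2 aes_root) _; rewrite hF card_byte.
exact (goppa256_code pchar2 aes_root phiK psiK hLinj hLim).
Qed.
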